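(* Let $v\in\mathbb R^w$ and $u\in\{-1,1\}^w$ be such that $\|v-u\|_1\le(1-\kappa)w$, where $\kappa>0$ is a positive constant. Then with probability $1-\exp(-\Omega(w))$, $$\mathrm{ham}(\mathbf{Round}(v),u)\le\frac12\left(1-\frac\kappa2\right)w.$$
   Context: $\mathbf{Round}:\mathbb R\to\{-1,1\}$ is the randomized function with: for $t\in[-1,1]$, $\mathbf{Round}(t)=1$ with probability $\frac{1+t}2$ and $-1$ with probability $\frac{1-t}2$; for $|t|>1$, $\mathbf{Round}(t)=\mathrm{sign}(t)$. For $v\in\mathbb R^w$, $\mathbf{Round}(v)=(\mathbf{Round}(v_1),\dots,\mathbf{Round}(v_w))$ with independent randomness per coordinate. $\mathrm{ham}(x,y)$ is the number of coordinates where $x,y\in\{-1,1\}^w$ differ, and $\|\cdot\|_1$ is the $\ell_1$ norm. *)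

From mathcomp Require Import all_boot all_order all_algebra.
From mathcomp Require Import all_classical all_reals all_analysis.
Set Implicit Arguments. Unset Strict Implicit. Unset Printing Implicit Defensive.
Import Order.TTheory GRing.Theory Num.Theory.
Local Open Scope ring_scope.

(* Sign vectors in {-1,1}^w are encoded as boolean finite functions:
   true <-> +1, false <-> -1. *)
Definition signvec (w : nat) := {ffun 'I_w -> bool}.

Definition pm {R : numDomainType} (b : bool) : R := if b then 1 else -1.

Definition ham (w : nat) (x y : signvec w) : nat := #|[set i | x i != y i]|.

Definition l1dist {R : realDomainType} (w : nat) (v : 'I_w -> R) (u : signvec w) : R :=
  \sum_(i < w) `|v i - pm (u i)|.

(* Probability that Round(t) = 1. *)
Definition round_p {R : realFieldType} (t : R) : R :=
  if 1 < t then 1 else if t < -1 then 0 else (1 + t) / 2.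

Definition round_prob {R : realFieldType} (w : nat) (v : 'I_w -> R) (x : signvec w) : R :=
  \prod_(i < w) (if x i then round_p (v i) else 1 - round_p (v i)).

Definition round_event_prob {R : realFieldType} (w : nat) (v : 'I_w -> R)
  (E : pred (signvec w)) : R :=
  \sum_(x : signvec w | E x) round_prob v x.

From mathcomp Require Import all_boot all_order all_algebra.
From mathcomp Require Import all_classical all_reals all_analysis.
From mathcomp Require Import ring lra.
Import Order.TTheory GRing.Theory Num.Theory.
Set Implicit Arguments. Unset Strict Implicit.
Local Open Scope ring_scope.

(* Coordinatewise, [Round(v_i)] differs from [u_i] with
   probability at most [|v_i - u_i| / 2], so by independence the exponential
   moment of the Hamming distance satisfies
   [E exp(lam ham) <= exp((e^lam - 1) / 2 * |v - u|_1) <= exp((e^lam - 1) (1 - kappa) w / 2)].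
   Markov's inequality at the threshold [b w], [b = (1 - kappa/2) / 2], bounds the
   failure probability by [exp(-(lam b - (e^lam - 1)(1 - kappa)/2) w)], and the rate
   is positive for [lam = kappa/4] because [e^lam - 1 <= lam / (1 - lam)].
   For [kappa > 1] the hypothesis cannot hold when [w > 0]. *)

Lemma sum_ffun_prod (R : comPzSemiRingType) (I J : finType) (F : I -> J -> R) :
  \sum_(x : {ffun I -> J}) \prod_i F i (x i) = \prod_i \sum_j F i j.
Proof. by rewrite bigA_distr_bigA. Qed.

Lemma ham_sum w (x u : signvec w) : ham x u = (\sum_i (x i != u i))%N.
Proof. by rewrite /ham -sum1_card big_mkcond /=; apply: eq_bigr => i _; rewrite inE. Qed.

Lemma chernoff_sum (R : realType) (T : finType) (P f : T -> R) (lam t : R) :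
  (forall x, 0 <= P x) -> 0 <= lam ->
  \sum_(x | t < f x) P x <= expR (- (lam * t)) * \sum_x P x * expR (lam * f x).
Proof.
move=> P_ge0 lam_ge0; rewrite mulr_sumr [X in _ <= X](bigID (fun x => t < f x)) /=.
have tail_le x : t < f x -> P x <= expR (- (lam * t)) * (P x * expR (lam * f x)).
  move=> t_lt_fx; rewrite mulrCA -expRD -[P x in X in X <= _]mulr1 ler_wpM2l //.
  by rewrite -expR0 ler_expR addrC -mulrBr mulr_ge0 // subr_ge0 ltW.
apply: le_trans (ler_sum _ tail_le) _; rewrite lerDl.
by apply: sumr_ge0 => x _; rewrite mulr_ge0 ?mulr_ge0 ?expR_ge0.
Qed.

Section Rounding.
Variable R : realType.
Implicit Types (t lam : R) (b : bool).

Definition round_pmf t b : R := if b then round_p t else 1 - round_p t.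

Lemma round_p_itv t : 0 <= round_p t <= 1.
Proof.
rewrite /round_p; case: ifPn => [_|]; first by rewrite ler01 lexx.
case: ifPn => [_|]; first by rewrite lexx ler01.
rewrite -!leNgt => ? ?; apply/andP; split; lra.
Qed.

Lemma round_pmf_ge0 t b : 0 <= round_pmf t b.
Proof. by have /andP[? ?] := round_p_itv t; rewrite /round_pmf; case: b; lra. Qed.

Lemma round_pmf_sum t : \sum_b round_pmf t b = 1.
Proof. by rewrite big_bool /= addrC subrK. Qed.

Lemma round_pmf_flip_le t b : round_pmf t (~~ b) <= `|t - pm b| / 2.
Proof.
have := ler_norm (t - pm b); have := ler_norm (- (t - pm b)); rewrite normrN.
rewrite /round_pmf /round_p /pm; case: b => /=.
all: case: ifPn; rewrite -?leNgt => ? ? ?; first lra.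
all: case: ifPn; rewrite -?leNgt => ?; lra.
Qed.

Lemma round_pmf_mgf t b lam : 0 <= lam ->
  \sum_b' round_pmf t b' * expR (lam * (b' != b)%:R)
  <= expR (`|t - pm b| / 2 * (expR lam - 1)).
Proof.
move=> lam_ge0; have flip_le := round_pmf_flip_le t b.
have E_ge1 : 1 <= expR lam by rewrite -expR0 ler_expR.
have sum1 := round_pmf_sum t; rewrite big_bool in sum1.
apply: le_trans (expR_ge1Dx _); rewrite big_bool.
have : round_pmf t (~~ b) * (expR lam - 1) <= `|t - pm b| / 2 * (expR lam - 1).
  by rewrite ler_wpM2r // subr_ge0.
by case: b flip_le => /= ?; rewrite ?mulr0 ?expR0 ?mulr1; lra.
Qed.

Variables (w : nat) (v : 'I_w -> R).

Lemma round_probE x : round_prob v x = \prod_i round_pmf (v i) (x i).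
Proof. by []. Qed.

Lemma round_prob_ge0 x : 0 <= round_prob v x.
Proof. by apply: prodr_ge0 => i _; apply: round_pmf_ge0. Qed.

Lemma round_prob_sum : \sum_x round_prob v x = 1.
Proof.
under eq_bigr do rewrite round_probE.
rewrite (sum_ffun_prod (fun i => round_pmf (v i))).
by apply: big1 => i _; apply: round_pmf_sum.
Qed.

Lemma round_event_prob_ge_compl (E F : pred (signvec w)) :
  (forall x, ~~ E x -> F x) -> 1 - round_event_prob v F <= round_event_prob v E.
Proof.
move=> notE_F; rewrite -round_prob_sum (bigID E) /= lerBlDr lerD2l.
have -> : \sum_(x | ~~ E x) round_prob v x = \sum_(x | F x && ~~ E x) round_prob v x.
  by apply: eq_bigl => x; case: (boolP (E x)) => [_|/notE_F ->]; rewrite ?andbF ?andbT.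
rewrite /round_event_prob [X in _ <= X](bigID (fun x => ~~ E x)) /= lerDl.
by apply: sumr_ge0 => x _; apply: round_prob_ge0.
Qed.

Lemma round_ham_mgf (u : signvec w) lam : 0 <= lam ->
  \sum_x round_prob v x * expR (lam * (ham x u)%:R)
  <= expR ((expR lam - 1) / 2 * l1dist v u).
Proof.
move=> lam_ge0.
under eq_bigr => x _.
  rewrite round_probE ham_sum natr_sum mulr_sumr expR_sum -big_split /=.
over.
rewrite (sum_ffun_prod (fun i b => round_pmf (v i) b * expR (lam * (b != u i)%:R))).
rewrite /l1dist mulr_sumr expR_sum.
apply: ler_prod => i _; rewrite sumr_ge0 => [|b _]; last first.
  by rewrite mulr_ge0 ?expR_ge0 ?round_pmf_ge0.
by rewrite mulrC mulrA mulrAC (round_pmf_mgf _ _ lam_ge0).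
Qed.

Lemma round_ham_tail (u : signvec w) lam t : 0 <= lam ->
  round_event_prob v (fun x => t < (ham x u)%:R)
  <= expR ((expR lam - 1) / 2 * l1dist v u - lam * t).
Proof.
move=> lam_ge0; rewrite addrC expRD.
apply: le_trans (chernoff_sum (fun x => (ham x u)%:R) t round_prob_ge0 lam_ge0) _.
by rewrite ler_wpM2l ?expR_ge0 ?round_ham_mgf.
Qed.

End Rounding.

Lemma expR_sub1_le (R : realType) (lam : R) : (expR lam - 1) * (1 - lam) <= lam.
Proof.
have := expR_ge1Dx (- lam); rewrite expRN => inv_ge.
have E_gt0 := expR_gt0 lam.
have : (1 - lam) * expR lam <= 1.
  by rewrite -[X in _ <= X](mulVf (lt0r_neq0 E_gt0)) ler_pM2r.
lra.
Qed.

Lemma chernoff_rate_gt0 (R : realType) (kappa : R) : 0 < kappa <= 1 ->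
  0 < kappa / 4 * (2^-1 * (1 - kappa / 2)) - (1 - kappa) / 2 * (expR (kappa / 4) - 1).
Proof.
case/andP=> kappa_gt0 kappa_le1.
have := expR_sub1_le (kappa / 4).
have : 0 <= (1 - kappa) / 2 by lra.
set E := expR _ - 1 => ? ?.
suff: 0 < (kappa / 4 * (2^-1 * (1 - kappa / 2)) - (1 - kappa) / 2 * E) * (1 - kappa / 4).
  by rewrite pmulr_lgt0 //; lra.
have : (1 - kappa) / 2 * (E * (1 - kappa / 4)) <= (1 - kappa) / 2 * (kappa / 4).
  exact: ler_wpM2l.
nra.
Qed.

Theorem lemma8p3 (R : realType) (kappa : R) (hk : 0 < kappa) :
  exists c : R, 0 < c /\ exists w0 : nat, forall (w : nat), (w0 <= w)%N ->
  forall (v : 'I_w -> R) (u : signvec w),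
    l1dist v u <= (1 - kappa) * w%:R ->
    round_event_prob v
      (fun x => (ham x u)%:R <= 2^-1 * (1 - kappa / 2) * w%:R)
      >= 1 - expR (- (c * w%:R)).
Proof.
have [kappa_gt1|kappa_le1] := ltrP 1 kappa.
  exists 1; split => //; exists 1%N => w w_gt0 v u l1_le; exfalso.
  have : 0 <= l1dist v u by apply: sumr_ge0.
  have : 1 <= w%:R :> R by rewrite ler1n.
  nra.
set lam := kappa / 4; set b := 2^-1 * (1 - kappa / 2); set a := (1 - kappa) / 2.
exists (lam * b - a * (expR lam - 1)); split.
  by apply: chernoff_rate_gt0; rewrite hk.
exists 0%N => w _ v u l1_le.
pose tail x := b * w%:R < (ham x u)%:R.
apply: le_trans _ (round_event_prob_ge_compl v (F := tail) _); last first.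
  by move=> x; rewrite -ltNge.
have lam_ge0 : 0 <= lam by rewrite /lam; lra.
rewrite lerD2l lerN2; apply: le_trans (round_ham_tail v u _ lam_ge0) _.
have : (expR lam - 1) / 2 * l1dist v u <= (expR lam - 1) / 2 * ((1 - kappa) * w%:R).
  by rewrite ler_wpM2l // divr_ge0 // subr_ge0 -expR0 ler_expR; lra.
rewrite ler_expR /a; lra.
Qed.
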